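(* Let $T$ be a complete $L$-theory and $\phi(x,y)$ an $L$-formula. Suppose there are infinite sequences $(a_i:i<\omega)$ and $(b_j:j<\omega)$ in some model of $T$, a natural number $N$ and a set $E\subseteq\{1,\ldots,N\}$ such that (i) for all $i_1<\cdots<i_N<\omega$, $\psi(a_{i_1},\ldots,a_{i_N})$ holds, where $$\psi(x_1,\ldots,x_N):=\neg\Big(\exists y\big(\bigwedge_{k\in E}\phi(x_k,y)\wedge\bigwedge_{k\in\{1,\ldots,N\}\setminus E}\neg\phi(x_k,y)\big)\Big);$$ (ii) $\phi(a_i,b_j)$ holds if and only if $i<j$. Then $T$ has the strict order property.
   Context: Let $\mathcal U$ be the monster model of $T$. A formula $\theta(x,y)$ (possibly in several variables) has the strict order property for $T$ if there is a sequence $(c_i:i<\omega)$ in $\mathcal U$ with $\theta(\mathcal U,c_i)\subsetneqq\theta(\mathcal U,c_{i+1})$ for all $i<\omega$. $T$ has the strict order property (SOP) if some $L$-formula has the strict order property for $T$. *)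

From mathcomp Require Import all_boot.
Set Implicit Arguments. Unset Strict Implicit. Unset Printing Implicit Defensive.

Record signature := Signature {
  fsym : Type; farity : fsym -> nat;
  rsym : Type; rarity : rsym -> nat }.

Inductive term (L : signature) : Type :=
| tvar : nat -> term L
| tapp : forall f : fsym L, ('I_(farity f) -> term L) -> term L.

Inductive formula (L : signature) : Type :=
| fFalse : formula L
| fEq : term L -> term L -> formula L
| fRel : forall r : rsym L, ('I_(rarity r) -> term L) -> formula L
| fNot : formula L -> formula L
| fAnd : formula L -> formula L -> formula L
| fOr : formula L -> formula L -> formula L
| fImp : formula L -> formula L -> formula L
| fEx : nat -> formula L -> formula L
| fAll : nat -> formula L -> formula L.

Record structure (L : signature) := Structure {
  carrier :> Type;
  witness : carrier;
  finterp : forall f : fsym L, ('I_(farity f) -> carrier) -> carrier;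
  rinterp : forall r : rsym L, ('I_(rarity r) -> carrier) -> Prop }.

Fixpoint eval (L : signature) (M : structure L) (v : nat -> M) (t : term L) : M :=
  match t with
  | tvar k => v k
  | tapp f ts => @finterp L M f (fun i => eval v (ts i))
  end.

Definition upd (T : Type) (v : nat -> T) (x : nat) (a : T) : nat -> T :=
  fun k => if k == x then a else v k.

Fixpoint sat (L : signature) (M : structure L) (v : nat -> M) (phi : formula L) : Prop :=
  match phi with
  | fFalse => False
  | fEq t1 t2 => eval v t1 = eval v t2
  | fRel r ts => @rinterp L M r (fun i => eval v (ts i))
  | fNot p => ~ sat v p
  | fAnd p q => sat v p /\ sat v q
  | fOr p q => sat v p \/ sat v q
  | fImp p q => sat v p -> sat v q
  | fEx x p => exists a : M, sat (upd v x a) p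
  | fAll x p => forall a : M, sat (upd v x a) p
  end.

Fixpoint term_fv (L : signature) (x : nat) (t : term L) : Prop :=
  match t with
  | tvar k => k = x
  | tapp f ts => exists i, term_fv x (ts i)
  end.

Fixpoint free_in (L : signature) (x : nat) (phi : formula L) : Prop :=
  match phi with
  | fFalse => False
  | fEq t1 t2 => term_fv x t1 \/ term_fv x t2
  | fRel r ts => exists i, term_fv x (ts i)
  | fNot p => free_in x p
  | fAnd p q | fOr p q | fImp p q => free_in x p \/ free_in x q
  | fEx y p | fAll y p => y <> x /\ free_in x p
  end.

Definition sentence (L : signature) (phi : formula L) : Prop :=
  forall x, ~ free_in x phi.

Definition models (L : signature) (M : structure L) (T : formula L -> Prop) : Prop :=
  forall phi, T phi -> forall v : nat -> M, sat v phi.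

Definition complete_theory (L : signature) (T : formula L -> Prop) : Prop :=
  [/\ (forall phi, T phi -> sentence phi),
      (exists M : structure L, models M T) &
      (forall s, sentence s ->
         (forall M : structure L, models M T -> forall v : nat -> M, sat v s) \/
         (forall M : structure L, models M T -> forall v : nat -> M, ~ sat v s))].

(* A formula phi(x,y) with x an n-tuple and y an m-tuple of variables:
   x_i is the variable i (i < n), y_j is the variable n + j (j < m),
   and phi has no other free variables. *)
Definition has_vars (L : signature) (phi : formula L) (n m : nat) : Prop :=
  forall x, free_in x phi -> x < n + m.

Definition pair_assign (L : signature) (M : structure L) (n m : nat)
  (a : 'I_n -> M) (b : 'I_m -> M) : nat -> M :=
  fun k => match (insub k : option 'I_n) with
           | Some i => a i
           | None => match (insub (k - n) : option 'I_m) with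
                     | Some j => b j
                     | None => witness M
                     end
           end.

Definition holds2 (L : signature) (M : structure L) (n m : nat)
  (phi : formula L) (a : 'I_n -> M) (b : 'I_m -> M) : Prop :=
  sat (pair_assign a b) phi.

Definition SOP (L : signature) (T : formula L -> Prop) : Prop :=
  exists (n m : nat) (theta : formula L), has_vars theta n m /\
  exists M : structure L, models M T /\
  exists c : nat -> 'I_m -> M, forall i : nat,
    (forall a : 'I_n -> M, holds2 theta a (c i) -> holds2 theta a (c i.+1)) /\
    (exists a : 'I_n -> M, holds2 theta a (c i.+1) /\ ~ holds2 theta a (c i)).

(* By Ramsey's theorem we may pass to a subsequence of (a_i) along which, for
   every sign pattern z in {0,1}^N, whether some y realizes z (phi(a_i, y) iff
   z_k at the k-th index) does not depend on the increasing tuple of indices.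
   The patterns 1..10..0 are realized by the b_j, while the pattern of E is not.
   Sorting it into 1..10..0 by adjacent swaps 01 -> 10 therefore meets words
   u01v, not realized, and u10v, realized.  Let theta(y; x) say that y realizes
   u1v on the tuple x, whose middle entry is a_r.  As r decreases, theta(M, -)
   grows strictly: a y in the set for r + 1 but not for r would realize u01v on
   (.., a_r, a_(r+1), ..), and a realization of u10v there is in the set for r
   but not for r + 1.  This gives chains of every finite length, and Los's
   theorem for a non-principal ultrapower of M yields an infinite one. *)

From mathcomp Require Import all_boot.
From mathcomp Require Import boolp classical_sets filter.
Set Implicit Arguments. Unset Strict Implicit. Unset Printing Implicit Defensive.

Section Syntax.
Variable L : signature.
Implicit Types (M : structure L) (t : term L) (p q : formula L).

Lemma eq_eval M (v v' : nat -> M) t :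
  (forall k, term_fv k t -> v k = v' k) -> eval v t = eval v' t.
Proof.
elim: t => [k|f ts IH] vv' /=; first exact: vv'.
by congr finterp; apply: funext => i; apply: IH => k ?; apply: vv'; exists i.
Qed.

Lemma eq_upd_free M x p (v v' : nat -> M) :
  (forall k, x <> k /\ free_in k p -> v k = v' k) ->
  forall c k, free_in k p -> upd v x c k = upd v' x c k.
Proof. by move=> vv' c k pk; rewrite /upd; case: eqP => // /nesym; auto. Qed.

Lemma eq_sat M p (v v' : nat -> M) :
  (forall k, free_in k p -> v k = v' k) -> (sat v p <-> sat v' p).
Proof.
elim: p v v' => [|t1 t2|r ts|p IH|p IHp q IHq|p IHp q IHq|p IHp q IHq|x p IH|x p IH]
  v v' vv' /=; try by [].
- by rewrite !(@eq_eval _ v v') // => k ?; apply: vv'; [right|left].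
- suff -> : (fun i => eval v (ts i)) = (fun i => eval v' (ts i)) by [].
  by apply: funext => i; apply: eq_eval => k ?; apply: vv'; exists i.
- by rewrite (IH v v').
- by rewrite (IHp v v') ?(IHq v v') // => k ?; apply: vv'; [right|left].
- by rewrite (IHp v v') ?(IHq v v') // => k ?; apply: vv'; [right|left].
- by rewrite (IHp v v') ?(IHq v v') // => k ?; apply: vv'; [right|left].
- have {}IH c := IH _ _ (eq_upd_free vv' c).
  by split=> -[c /IH]; exists c.
- have {}IH c := IH _ _ (eq_upd_free vv' c).
  by split=> vp c; apply/IH.
Qed.

Fixpoint rename_term (s : nat -> nat) t : term L :=
  match t with
  | tvar k => tvar L (s k)
  | tapp f ts => tapp (fun i => rename_term s (ts i))
  end.

(* Bound variables are renamed to [B, B+1, ...]; the renaming stays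
   capture-free as long as [s] maps the free variables below [B]. *)
Fixpoint rename (B : nat) (s : nat -> nat) p : formula L :=
  match p with
  | fFalse => fFalse L
  | fEq t1 t2 => fEq (rename_term s t1) (rename_term s t2)
  | fRel r ts => fRel (fun i => rename_term s (ts i))
  | fNot q => fNot (rename B s q)
  | fAnd q1 q2 => fAnd (rename B s q1) (rename B s q2)
  | fOr q1 q2 => fOr (rename B s q1) (rename B s q2)
  | fImp q1 q2 => fImp (rename B s q1) (rename B s q2)
  | fEx x q => fEx B (rename B.+1 (upd s x B) q)
  | fAll x q => fAll B (rename B.+1 (upd s x B) q)
  end.

Lemma eval_rename M (v : nat -> M) s t :
  eval v (rename_term s t) = eval (v \o s) t.
Proof. by elim: t => [k|f ts IH] //=; congr finterp; apply: funext => i. Qed.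

Lemma free_rename_term s t k :
  term_fv k (rename_term s t) -> exists2 j, term_fv j t & k = s j.
Proof.
elim: t => [j|f ts IH] /=; first by move=> <-; exists j.
by case=> i /IH [j ? ->]; exists j => //; exists i.
Qed.

Lemma rename_upd_bound B s x p :
  (forall k, x <> k /\ free_in k p -> s k < B) ->
  forall k, free_in k p -> upd s x B k < B.+1.
Proof.
move=> sB k pk; rewrite /upd; case: eqP => // kx.
by apply/ltnW/sB; split=> // /esym.
Qed.

Lemma rename_upd_shift M B s x p (v : nat -> M) c :
  (forall k, x <> k /\ free_in k p -> s k < B) ->
  forall k, free_in k p -> upd v B c (upd s x B k) = upd (v \o s) x c k.
Proof.
move=> sB k pk; rewrite /upd; case: (k =P x) => [_|kx]; first by rewrite eqxx.
have : s k < B by apply: sB; split=> // /esym.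
by case: eqP => // ->; rewrite ltnn.
Qed.

Lemma sat_rename M p B s (v : nat -> M) :
  (forall k, free_in k p -> s k < B) ->
  (sat v (rename B s p) <-> sat (v \o s) p).
Proof.
elim: p B s v => [|t1 t2|r ts|p IH|p IHp q IHq|p IHp q IHq|p IHp q IHq|x p IH|x p IH]
  B s v sB /=; try by [].
- by rewrite !eval_rename.
- suff -> : (fun i => eval v (rename_term s (ts i))) = (fun i => eval (v \o s) (ts i)) by [].
  by apply: funext => i; rewrite eval_rename.
- by rewrite IH.
- by rewrite IHp ?IHq // => k ?; apply: sB; [right|left].
- by rewrite IHp ?IHq // => k ?; apply: sB; [right|left].
- by rewrite IHp ?IHq // => k ?; apply: sB; [right|left].
- have {}IH c : sat (upd v B c) (rename B.+1 (upd s x B) p) <-> sat (upd (v \o s) x c) p.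
    by rewrite IH; [apply: eq_sat; apply: rename_upd_shift|apply: rename_upd_bound].
  by split=> -[c /IH]; exists c.
- have {}IH c : sat (upd v B c) (rename B.+1 (upd s x B) p) <-> sat (upd (v \o s) x c) p.
    by rewrite IH; [apply: eq_sat; apply: rename_upd_shift|apply: rename_upd_bound].
  by split=> vp c; apply/IH.
Qed.

Lemma free_rename p B s k :
  free_in k (rename B s p) -> exists2 j, free_in j p & k = s j.
Proof.
elim: p B s k => [|t1 t2|r ts|p IH|p IHp q IHq|p IHp q IHq|p IHp q IHq|x p IH|x p IH]
  B s k /=; try by [].
- by case=> /free_rename_term [j ? ->]; exists j => //; tauto.
- by case=> i /free_rename_term [j ? ->]; exists j => //; exists i.
- exact: IH.
- by case=> [/IHp|/IHq] [j ? ->]; exists j => //; tauto.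
- by case=> [/IHp|/IHq] [j ? ->]; exists j => //; tauto.
- by case=> [/IHp|/IHq] [j ? ->]; exists j => //; tauto.
- case=> Bk /IH [j pj]; rewrite /upd; case: eqP => [_ /esym/Bk //|/nesym xj ->].
  by exists j.
- case=> Bk /IH [j pj]; rewrite /upd; case: eqP => [_ /esym/Bk //|/nesym xj ->].
  by exists j.
Qed.

Definition big_fAnd (F : nat -> formula L) (ks : seq nat) : formula L :=
  foldr (fun k => fAnd (F k)) (fNot (fFalse L)) ks.

Lemma sat_big_fAnd M (v : nat -> M) F ks :
  sat v (big_fAnd F ks) <-> (forall k, k \in ks -> sat v (F k)).
Proof.
elim: ks => [|k ks IH] /=; first by split=> // _ k.
rewrite IH; split=> [[Fk Fks] j|Fks]; first by rewrite inE => /predU1P [->|/Fks].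
by split=> [|j jks]; apply: Fks; rewrite inE ?eqxx ?jks ?orbT.
Qed.

Lemma free_big_fAnd F ks k :
  free_in k (big_fAnd F ks) -> exists2 j, j \in ks & free_in k (F j).
Proof.
elim: ks => [|j ks IH] //= [Fj|/IH [i iks Fi]]; first by exists j; rewrite ?inE ?eqxx.
by exists i; rewrite // inE iks orbT.
Qed.

Definition fLit (b : bool) p := if b then p else fNot p.

Lemma sat_fLit M (v : nat -> M) b p : sat v (fLit b p) <-> (sat v p <-> b).
Proof. by case: b => /=; split=> [|[]]; try split; auto. Qed.

Lemma free_fLit b p k : free_in k (fLit b p) -> free_in k p.
Proof. by case: b. Qed.

End Syntax.

Lemma choice_partial (I T : Type) (x0 : T) (Q : I -> T -> Prop) :
  exists f : I -> T, forall i, (exists x, Q i x) -> Q i (f i).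
Proof.
have /choice [f fP] : forall i, exists x, (exists y, Q i y) -> Q i x.
  by move=> i; case: (pselect (exists y, Q i y)) => [[y Qy]|nQ]; [exists y|exists x0].
by exists f.
Qed.

Section ClassicalQuotient.
Variables (T : Type) (R : T -> T -> Prop).
Hypotheses (R_refl : forall x, R x x) (R_sym : forall x y, R x y -> R y x)
  (R_trans : forall x y z, R x y -> R y z -> R x z).

Definition quot := {P : T -> Prop | exists x, P = R x}.

Definition qclass (x : T) : quot := exist _ (R x) (ex_intro _ x erefl).

Definition qrepr (q : quot) : T := sval (cid (svalP q)).

Lemma qclass_eqP x y : qclass x = qclass y <-> R x y.
Proof.
split=> [/(congr1 sval) /= Rxy|Rxy]; first by rewrite Rxy.
apply: eq_exist; apply: funext => z; apply: propext.
by split; [apply: R_trans; apply: R_sym|apply: R_trans].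
Qed.

Lemma qreprK q : qclass (qrepr q) = q.
Proof.
rewrite /qrepr; case: cid => x /= Ex.
by case: q Ex => P HP /= EP; apply: eq_exist.
Qed.

Lemma qclassK x : R (qrepr (qclass x)) x.
Proof. by apply/qclass_eqP; rewrite qreprK. Qed.

End ClassicalQuotient.

Section UltraFilterFacts.
Context (U : set_system nat) {U_ultra : UltraFilter U}.
Implicit Types A B : nat -> Prop.

Lemma ultraN A : ~ U A <-> U (fun k => ~ A k).
Proof.
split; first by case: (in_ultra_setVsetC A U_ultra).
move=> nA uA; apply: (@filter_const _ U _ False).
by apply: filterS2 nA uA => k.
Qed.

Lemma ultra_iff A B : U (fun k => A k <-> B k) -> (U A <-> U B).
Proof. by move=> AB; split; apply: filterS2 AB => k [] //; auto. Qed.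

Lemma ultraI A B : U (fun k => A k /\ B k) <-> U A /\ U B.
Proof.
split=> [AB|[]]; last exact: filterI.
by split; apply: filterS AB => k [].
Qed.

Lemma ultraU A B : U (fun k => A k \/ B k) <-> U A \/ U B.
Proof.
split=> [AB|[uA|uB]]; [|by apply: filterS uA => k; left|by apply: filterS uB => k; right].
case: (pselect (U A)) => [|/ultraN nA]; first by left.
by right; apply: filterS2 AB nA => k [].
Qed.

Lemma ultra_imply A B : U (fun k => A k -> B k) <-> (U A -> U B).
Proof.
split=> [AB|AB]; first exact: filter_app.
case: (pselect (U A)) => [/AB|/ultraN]; apply: filterS => k //; by auto.
Qed.

End UltraFilterFacts.

Section Ultrapower.
Variables (L : signature) (M : structure L).
Context (U : set_system nat) {U_ultra : UltraFilter U}.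

Definition ueq (f g : nat -> M) : Prop := U (fun k => f k = g k).

Lemma ueq_refl f : ueq f f. Proof. exact: filterE. Qed.
Lemma ueq_sym f g : ueq f g -> ueq g f. Proof. by apply: filterS. Qed.
Lemma ueq_trans f g h : ueq f g -> ueq g h -> ueq f h.
Proof. by apply: filterS2 => k -> ->. Qed.

Definition uclass : (nat -> M) -> quot ueq := qclass ueq.
Definition urepr : quot ueq -> nat -> M := @qrepr _ ueq.

Lemma uclass_eqP f g : uclass f = uclass g <-> ueq f g.
Proof. exact: (qclass_eqP ueq_refl ueq_sym ueq_trans). Qed.

Lemma ureprK x : uclass (urepr x) = x. Proof. exact: qreprK. Qed.

Lemma uclassK f : ueq (urepr (uclass f)) f.
Proof. exact: (qclassK ueq_refl ueq_sym ueq_trans). Qed.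

Definition ultrapower : structure L :=
  @Structure L (quot ueq) (uclass (fun=> witness M))
    (fun f xs => uclass (fun k => finterp (fun i => urepr (xs i) k)))
    (fun r xs => U (fun k => rinterp (fun i => urepr (xs i) k))).

Definition ulift (V : nat -> nat -> M) : nat -> ultrapower :=
  fun j => uclass (fun k => V k j).

Lemma ulift_repr (v : nat -> ultrapower) : v = ulift (fun k j => urepr (v j) k).
Proof. by apply: funext => j; rewrite /ulift ureprK. Qed.

Lemma upd_ulift V x c :
  upd (ulift V) x c = ulift (fun k => upd (V k) x (urepr c k)).
Proof. by apply: funext => j; rewrite /upd /ulift; case: eqP; rewrite ?ureprK. Qed.

Lemma ueq_eval_args (I : finType) (ts : I -> term L) V :
  (forall i, eval (ulift V) (ts i) = uclass (fun k => eval (V k) (ts i))) ->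
  U (fun k => (fun i => urepr (eval (ulift V) (ts i)) k) = (fun i => eval (V k) (ts i))).
Proof.
move=> Ets; have : U (fun k => forall i, urepr (eval (ulift V) (ts i)) k = eval (V k) (ts i)).
  by apply: filter_forall => i; rewrite Ets; apply: uclassK.
by apply: filterS => k Ek; apply: funext.
Qed.

Lemma eval_ulift V t : eval (ulift V) t = uclass (fun k => eval (V k) t).
Proof.
elim: t => [j|f ts IH] //=; apply/uclass_eqP.
by apply: filterS (ueq_eval_args IH) => k ->.
Qed.

Lemma sat_ulift p V : sat (ulift V) p <-> U (fun k => sat (V k) p).
Proof.
elim: p V => [|t1 t2|r ts|p IH|p IHp q IHq|p IHp q IHq|p IHp q IHq|x p IH|x p IH] V /=.
- by split=> // /filter_const.
- by rewrite !eval_ulift uclass_eqP.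
- by apply: ultra_iff; apply: filterS (ueq_eval_args (fun i => eval_ulift V (ts i))) => k ->.
- by rewrite IH ultraN.
- by rewrite IHp IHq ultraI.
- by rewrite IHp IHq ultraU.
- by rewrite IHp IHq ultra_imply.
- split=> [[c]|Up]; first by rewrite upd_ulift IH; apply: filterS => k; exists (urepr c k).
  have [c cP] := choice_partial (witness M) (fun k a => sat (upd (V k) x a) p).
  exists (uclass c); rewrite upd_ulift IH.
  by apply: filterS2 (uclassK c) Up => k -> /cP.
- split=> [Up|Up c]; last by rewrite upd_ulift IH; apply: filterS Up.
  apply: contrapT => /(iffLR (ultraN _)) nUp.
  have [c cP] := choice_partial (witness M) (fun k a => ~ sat (upd (V k) x a) p).
  have := Up (uclass c); rewrite upd_ulift IH => Upc.
  apply: (@filter_const _ U _ False); apply: filterS3 Upc nUp (uclassK c) => k + np ck.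
  by rewrite ck; apply: cP; apply/existsNP.
Qed.

End Ultrapower.

Lemma ultrafilter_eventually :
  exists U : set_system nat, UltraFilter U /\ forall A, eventually A -> U A.
Proof. exact: ultraFilterLemma. Qed.

Section Compactness.
Variables (L : signature) (M : structure L).
Context (U : set_system nat) {U_ultra : UltraFilter U}.
Local Notation uM := (ultrapower M U).

Lemma models_ultrapower T : models M T -> models uM T.
Proof.
by move=> MT p Tp v; rewrite (ulift_repr v) sat_ulift; apply: filterE => k; apply: MT.
Qed.

Lemma tuple_urepr n (x : 'I_n -> uM) : x = fun i => uclass U (fun k => urepr (x i) k).
Proof. by apply: funext => i; rewrite ureprK. Qed.

Lemma holds2_ultrapower n m theta (x : nat -> 'I_n -> M) (y : nat -> 'I_m -> M) :
  holds2 theta (fun i => uclass U (fun k => x k i) : uM) (fun j => uclass U (fun k => y k j))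
  <-> U (fun k => holds2 theta (x k) (y k)).
Proof.
rewrite /holds2 -sat_ulift; suff -> : pair_assign (fun i => uclass U (fun k => x k i) : uM)
   (fun j => uclass U (fun k => y k j)) = ulift U (fun k => pair_assign (x k) (y k)) by [].
by apply: funext => j; rewrite /pair_assign /ulift; case: insub => [i|] //; case: insub.
Qed.

End Compactness.

Definition grows_strictly L (M : structure L) n m (theta : formula L) (c c' : 'I_m -> M) :=
  (forall x : 'I_n -> M, holds2 theta x c -> holds2 theta x c') /\
  (exists x : 'I_n -> M, holds2 theta x c' /\ ~ holds2 theta x c).

Lemma sop_of_finite_chains L (T : formula L -> Prop) (M : structure L) n m theta :
  models M T -> has_vars theta n m ->
  (forall K, exists c : nat -> 'I_m -> M,
     forall t, t < K -> grows_strictly n theta (c t) (c t.+1)) ->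
  SOP T.
Proof.
move=> MT theta_nm chains; have [U [U_ultra ooU]] := ultrafilter_eventually.
have /choice [C CP] := chains.
exists n, m, theta; split=> //; exists (ultrapower M U); split; first exact: models_ultrapower.
exists (fun t j => uclass U (fun K => C K t j)) => t.
have Ut : U (fun K => t < K) by apply: ooU; exists t.+1.
split=> [x|].
  rewrite (tuple_urepr x) !holds2_ultrapower.
  by apply: filterS2 Ut => K /CP [+ _]; apply.
have [x xP] := choice_partial (fun _ : 'I_n => witness M)
  (fun K x => holds2 theta x (C K t.+1) /\ ~ holds2 theta x (C K t)).
exists (fun i => uclass U (fun K => x K i)); rewrite !holds2_ultrapower; split.
  by apply: filterS Ut => K /CP [_ /xP []].
move=> Ux; apply: (@filter_const _ U _ False).
by apply: filterS2 Ut Ux => K /CP [_ /xP [_ +]].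
Qed.

Lemma exists_map_preimage (A : eqType) (B C : Type) (F : A -> C) (f : B -> C) s :
  (forall x, x \in s -> exists y, F x = f y) -> exists s', map F s = map f s'.
Proof.
elim: s => [|x s IH] sf /=; first by exists [::].
have [y ->] := sf x (mem_head x s).
have [s' ->] := IH (fun z zs => sf z (mem_behead (s := x :: s) zs)).
by exists (y :: s').
Qed.

Lemma infinite_pigeonhole (c : nat -> bool) :
  exists b (sel : nat -> nat), {homo sel : i j / i < j} /\ forall k, c (sel k) = b.
Proof.
have [/choice [f fP]|] := pselect (forall t, exists i, t < i /\ c i).
  exists true, (fun k => iter k.+1 f 0); split=> [|k]; last by case: (fP (iter k f 0)).
  by apply: homo_ltn ltn_trans _ => k; case: (fP (iter k.+1 f 0)).
move=> /existsNP [t] /forallNP tF; exists false, (addn t.+1); split=> [i j|k].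
  by rewrite ltn_add2l.
by apply/negbTE/negP => ctk; apply: (tF (t.+1 + k)); rewrite ltnS leq_addr.
Qed.

Lemma sorted_ltn_cat s1 s2 : sorted ltn s1 -> sorted ltn s2 ->
  {in s1 & s2, forall x y, x < y} -> sorted ltn (s1 ++ s2).
Proof.
rewrite !(sorted_pairwise ltn_trans) pairwise_cat => -> -> s12.
by rewrite !andbT; apply/allrelP.
Qed.

Lemma sorted_iota_gap p r c l : p <= r -> r.+2 <= c ->
  sorted ltn (iota 0 p ++ iota r 2 ++ iota c l).
Proof.
move=> pr rc; have rc' : r < c by apply: ltn_trans rc.
apply: sorted_ltn_cat; rewrite ?iota_ltn_sorted //.
  apply: sorted_ltn_cat; rewrite ?iota_ltn_sorted // => x y.
  rewrite !mem_iota addn2 => /andP [_ xr] /andP [cy _].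
  exact: leq_trans xr (leq_trans rc cy).
move=> x y; rewrite mem_cat !mem_iota add0n => /andP [_ xp] /orP [] /andP [ry _].
  exact: leq_trans xp (leq_trans pr ry).
exact: leq_trans xp (leq_trans pr (ltnW (leq_trans rc' ry))).
Qed.

Definition ascending N (s : seq nat) := (size s == N) && sorted ltn s.

Definition homogeneous N (P : seq nat -> Prop) (g : nat -> nat) :=
  exists b : bool, forall s, ascending N s -> (P (map g s) <-> b).

Lemma ascending_map N g s :
  {homo g : i j / i < j} -> ascending N (map g s) = ascending N s.
Proof.
move=> g_incr; rewrite /ascending size_map sorted_map; case: s => //= i s.
by congr (_ && _); apply: eq_path => j k; apply: (leqW_mono (leq_mono g_incr)).
Qed.

Lemma homogeneous_comp N P g h :
  {homo h : i j / i < j} -> homogeneous N P g -> homogeneous N P (g \o h).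
Proof.
by move=> h_incr [b Pb]; exists b => s s_asc; rewrite map_comp Pb ?ascending_map.
Qed.

Section RamseyStep.
Variables (N : nat) (P : seq nat -> Prop).
Variables (G : (nat -> nat) -> nat -> nat) (B : (nat -> nat) -> bool).
Hypothesis G_incr : forall h, {homo G h : i j / i < j}.
Hypothesis G_homog : forall h s, ascending N s ->
  (P (h 0 :: map (h \o succn \o G h) s) <-> B h).

(* [shrink i.+1] enumerates a subsequence of [shrink i] past its first element
   [pivot i], on which every ascending extension of [pivot i] has colour
   [B (shrink i)]. *)
Fixpoint shrink i : nat -> nat :=
  if i is i'.+1 then shrink i' \o succn \o G (shrink i') else id.

Definition pivot i := shrink i 0.

Lemma shrink_incr i : {homo shrink i : j k / j < k}.
Proof. by elim: i => [|i IH] //= j k jk; apply/IH/G_incr. Qed.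

Lemma shrinkD i j : exists e, shrink (i + j) = shrink i \o e.
Proof.
elim: j => [|j [e IH]]; first by exists id; rewrite addn0.
by exists (e \o succn \o G (shrink (i + j))); rewrite addnS /= IH.
Qed.

Lemma pivot_incr : {homo pivot : i j / i < j}.
Proof. by apply: homo_ltn ltn_trans _ => i; apply: shrink_incr. Qed.

Lemma pivot_homog i s : ascending N s -> all (ltn i) s ->
  (P (map pivot (i :: s)) <-> B (shrink i)).
Proof.
move=> s_asc /allP s_gt.
have [s' Es'] : exists s', map pivot s = map (shrink i.+1) s'.
  apply: exists_map_preimage => k /s_gt ik.
  rewrite /pivot -(subnKC ik); have [e ->] := shrinkD i.+1 (k - i.+1).
  by exists (e 0).
have s'_asc : ascending N s'.
  rewrite -(ascending_map _ _ pivot_incr) Es' ascending_map in s_asc => //.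
  exact: shrink_incr.
by rewrite /= Es' -(G_homog _ s'_asc).
Qed.

End RamseyStep.

Theorem ramsey N (P : seq nat -> Prop) :
  exists g, {homo g : i j / i < j} /\ homogeneous N P g.
Proof.
elim: N P => [|N IH] P.
  exists id; split=> //; have [Pnil|nPnil] := pselect (P [::]).
    by exists true => s /andP [/eqP/size0nil -> _].
  by exists false => s /andP [/eqP/size0nil -> _].
have /choice [GB GP] : forall h, exists gb : (nat -> nat) * bool,
    {homo gb.1 : i j / i < j} /\
    forall s, ascending N s -> (P (h 0 :: map (h \o succn \o gb.1) s) <-> gb.2).
  move=> h; have [g [g_incr [b gb]]] := IH (fun s => P (h 0 :: map (h \o succn) s)).
  by exists (g, b); split=> // s /gb; rewrite -map_comp.
pose G h := (GB h).1; pose B h := (GB h).2.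
have G_incr h : {homo G h : i j / i < j} := (GP h).1.
have G_homog h := (GP h).2.
have [b [sel [sel_incr selb]]] := infinite_pigeonhole (fun i => B (shrink G i)).
exists (pivot G \o sel); split=> [i j ij|]; first exact/pivot_incr/sel_incr.
exists b => -[//|k s] /andP [/= /eqP [s_size] s_path].
have s_asc : ascending N (map sel s).
  by rewrite ascending_map // /ascending s_size eqxx (path_sorted s_path).
have s_gt : all (ltn (sel k)) (map sel s).
  apply/allP => _ /mapP [j js ->]; apply: sel_incr.
  by move/(order_path_min ltn_trans)/allP: s_path; apply.
by rewrite -(selb k) -(pivot_homog G_incr G_homog s_asc s_gt) /= map_comp.
Qed.

Lemma ramsey_finite (I : finType) N (P : I -> seq nat -> Prop) :
  exists g, {homo g : i j / i < j} /\ forall i, homogeneous N (P i) g.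
Proof.
suff [g [g_incr gP]] : exists g, {homo g : i j / i < j} /\
    forall i, i \in enum I -> homogeneous N (P i) g.
  by exists g; split=> // i; apply: gP; rewrite mem_enum.
elim: (enum I) => [|x r [g [g_incr gP]]]; first by exists id; split.
have [h [h_incr [b hb]]] := ramsey N (fun s => P x (map g s)).
exists (g \o h); split=> [j k jk|j]; first exact/g_incr/h_incr.
rewrite inE => /predU1P [->|/gP]; last exact: homogeneous_comp.
by exists b => s /hb; rewrite map_comp.
Qed.

Definition geb (x y : bool) := y ==> x.

Lemma sorted_geb_nth z k : sorted geb z -> k < size z ->
  nth false z k = (k < find negb z).
Proof.
move=> z_sorted kz; case: ltnP => [/(before_find false)/negbFE -> //|zk].
have fz : find negb z < size z by apply: leq_ltn_trans kz.
have /negbTE zf : ~~ nth false z (find negb z) by apply: nth_find; rewrite has_find.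
apply/negbTE; move: zk; rewrite leq_eqVlt => /predU1P [<-|fk]; first by rewrite zf.
have geb_trans : transitive geb by move=> ? ? ? /implyP yx /implyP zy; apply/implyP => /zy.
by have := sorted_ltn_nth geb_trans false z_sorted _ _ fz kz fk; rewrite /geb zf implybF.
Qed.

Lemma sorted_gebVswap z :
  sorted geb z \/ exists u v, z = u ++ false :: true :: v.
Proof.
elim: z => [|x [|y z] IH]; [by left|by left|].
case: IH => [yz_sorted|[u [v ->]]]; last by right; exists (x :: u), v.
have [xy|] := boolP (geb x y); first by left; rewrite /= xy.
by case: x y yz_sorted => [] [] // _ _; right; exists [::], z.
Qed.

Fixpoint inversions (z : seq bool) : nat :=
  if z is x :: z' then ~~ x * count id z' + inversions z' else 0.

Lemma inversions_swap u v :
  inversions (u ++ true :: false :: v) < inversions (u ++ false :: true :: v).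
Proof.
elim: u => [|x u IH] /=; first by rewrite !mul0n !mul1n !add0n add1n addSn ltnSn.
by rewrite !count_cat /= !add0n ltn_add2l.
Qed.

Lemma exists_critical_swap N (R : seq bool -> Prop) z :
  (forall z, size z = N -> sorted geb z -> R z) -> size z = N -> ~ R z ->
  exists u v, [/\ size (u ++ false :: true :: v) = N,
                 ~ R (u ++ false :: true :: v) & R (u ++ true :: false :: v)].
Proof.
move=> R_sorted; have [k] := ubnP (inversions z); elim: k z => // k IH z zk zN nRz.
have [/(R_sorted _ zN) //|[u [v Ez]]] := sorted_gebVswap z.
rewrite Ez in zk zN nRz; have [Rs|nRs] := pselect (R (u ++ true :: false :: v)).
  by exists u, v.
apply: IH nRs; first exact: leq_trans (inversions_swap u v) zk.
by rewrite -zN !size_cat.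
Qed.

Lemma ltn_mod_ord N n (o : 'I_(N * n)) : o %% n < n.
Proof. by rewrite ltn_pmod //; case: n o => [|//] [o]; rewrite muln0. Qed.

Definition flatten_tuple T N n (x : nat -> 'I_n -> T) (o : 'I_(N * n)) : T :=
  x (o %/ n) (Ordinal (ltn_mod_ord o)).

Lemma flatten_tupleE T N n (x : nat -> 'I_n -> T) k (i : 'I_n)
  (ki : k * n + i < N * n) : flatten_tuple x (Ordinal ki) = x k i.
Proof.
have n_gt0 : 0 < n by apply: leq_ltn_trans (ltn_ord i).
rewrite /flatten_tuple /= divnMDl // divn_small // addn0; congr x.
by apply: val_inj; rewrite /= modnMDl modn_small.
Qed.

Lemma pair_assign_lt L (M : structure L) n m (x : 'I_n -> M) (y : 'I_m -> M) j
  (jn : j < n) : pair_assign x y j = x (Ordinal jn).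
Proof. by rewrite /pair_assign insubT. Qed.

Lemma pair_assign_ge L (M : structure L) n m (x : 'I_n -> M) (y : 'I_m -> M) j
  (nj : n <= j) (jm : j - n < m) : pair_assign x y j = y (Ordinal jm).
Proof. by rewrite /pair_assign insubF ?insubT // ltnNge nj. Qed.

Section Patterns.
Variables (L : signature) (n m : nat) (phi : formula L) (M : structure L).
Variable a : nat -> 'I_n -> M.

Definition realizes (y : 'I_m -> M) (z : seq bool) (s : seq nat) :=
  forall k, k < size z -> (holds2 phi (a (nth 0 s k)) y <-> nth false z k).

Definition realized z s := exists y, realizes y z s.

Lemma realizes_cat y z1 z2 s :
  realizes y (z1 ++ z2) s <-> realizes y z1 s /\ realizes y z2 (drop (size z1) s).
Proof.
split=> [yz|[yz1 yz2] k].
  split=> k kz; first by have := yz k; rewrite size_cat ltn_addr // nth_cat kz; apply.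
  have := yz (size z1 + k); rewrite size_cat ltn_add2l nth_cat addKn.
  rewrite (_ : size z1 + k < size z1 = false); last by rewrite ltnNge leq_addr.
  by rewrite nth_drop => /(_ kz).
rewrite size_cat nth_cat; case: (ltnP k (size z1)) => [kz1 _|kz1 kz]; first exact: yz1.
by have := yz2 (k - size z1); rewrite nth_drop subnKC // ltn_subLR //; apply.
Qed.

Lemma realizes_cons y x z i s :
  realizes y (x :: z) (i :: s) <-> (holds2 phi (a i) y <-> x) /\ realizes y z s.
Proof.
split=> [yz|[yx yz] [|k] //]; last exact: yz.
by split=> [|k kz]; [apply: (yz 0)|apply: (yz k.+1)].
Qed.

Section Middle.
Variables (u : seq bool) (lo : seq nat).
Hypothesis lo_u : size lo = size u.

Lemma realizes_mid y x v i hi :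
  realizes y (u ++ x :: v) (lo ++ i :: hi) <->
  [/\ realizes y u lo, (holds2 phi (a i) y <-> x) & realizes y v hi].
Proof.
rewrite realizes_cat -lo_u drop_size_cat // realizes_cons.
suff -> : realizes y u (lo ++ i :: hi) <-> realizes y u lo by split=> [[? []]|[]].
by split=> yu k ku; rewrite -yu // nth_cat lo_u ku.
Qed.

Lemma realizes_mid2 y x x' v i j hi :
  realizes y (u ++ x :: x' :: v) (lo ++ i :: j :: hi) <->
  [/\ realizes y u lo, (holds2 phi (a i) y <-> x), (holds2 phi (a j) y <-> x')
    & realizes y v hi].
Proof.
rewrite realizes_mid; split=> [[yu yi /realizes_cons [yj yv]]|[yu yi yj yv]]; split=> //.
exact/realizes_cons.
Qed.

Lemma swap_chain_step v hi i j :
  realized (u ++ true :: false :: v) (lo ++ i :: j :: hi) ->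
  ~ realized (u ++ false :: true :: v) (lo ++ i :: j :: hi) ->
  (forall y, realizes y (u ++ true :: v) (lo ++ j :: hi) ->
             realizes y (u ++ true :: v) (lo ++ i :: hi)) /\
  (exists y, realizes y (u ++ true :: v) (lo ++ i :: hi) /\
             ~ realizes y (u ++ true :: v) (lo ++ j :: hi)).
Proof.
move=> [y10 /realizes_mid2 [yu yi yj yv]] nR01; split=> [y /realizes_mid [y'u y'j y'v]|].
  apply/realizes_mid; split=> //; split=> // _; apply: contrapT => ny'i.
  by apply: nR01; exists y; apply/realizes_mid2; split=> //; split.
exists y10; split; first by apply/realizes_mid; split=> //; split=> // _; apply/yi.
by case/realizes_mid => _ [_ /(_ isT)/yj].
Qed.

End Middle.

Hypothesis phi_nm : has_vars phi n m.

(* Variable [j < n] of [phi] (the [j]-th entry of [x]) becomes entry [j] of the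
   [k]-th block of parameters, and variable [n + j] (entry [j] of [y]) becomes
   variable [j]. *)
Definition slot k j := if j < n then m + (k * n + j) else j - n.

Definition pattern_formula (z : seq bool) : formula L :=
  big_fAnd (fun k => fLit (nth false z k) (rename (m + size z * n) (slot k) phi))
           (iota 0 (size z)).

Lemma slot_bound N k j : k < N -> j < n + m -> slot k j < m + N * n.
Proof.
move=> kN jnm; rewrite /slot; case: (ltnP j n) => jn; last first.
  by rewrite ltn_subLR // addnA (leq_trans jnm) // leq_addr.
rewrite ltn_add2l (@leq_trans (k.+1 * n)) ?leq_mul2r ?kN ?orbT //.
by rewrite mulSn addnC ltn_add2r.
Qed.

Lemma pattern_formula_vars z : has_vars (pattern_formula z) m (size z * n).
Proof.
move=> x /free_big_fAnd [k]; rewrite mem_iota add0n => kz.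
by move=> /free_fLit /free_rename [j /phi_nm jnm ->]; apply: slot_bound.
Qed.

Lemma pair_assign_slot N (y : 'I_m -> M) (x : nat -> 'I_n -> M) k j :
  k < N -> j < n + m ->
  pair_assign y (flatten_tuple (N := N) x) (slot k j) = pair_assign (x k) y j.
Proof.
move=> kN jnm; have := slot_bound kN jnm; rewrite /slot; case: (ltnP j n) => jn sb.
  have ki : k * n + j < N * n by rewrite -(ltn_add2l m).
  have jm : m + (k * n + j) - m < N * n by rewrite addKn.
  rewrite (pair_assign_ge _ _ (leq_addr _ _) jm) (pair_assign_lt _ _ jn).
  rewrite -(flatten_tupleE x (i := Ordinal jn) ki); congr flatten_tuple.
  by apply: val_inj; rewrite /= addKn.
have jm : j - n < m by rewrite ltn_subLR.
by rewrite (pair_assign_lt _ _ jm) (pair_assign_ge _ _ jn jm).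
Qed.

Lemma holds2_pattern z (y : 'I_m -> M) (x : nat -> 'I_n -> M) :
  holds2 (pattern_formula z) y (flatten_tuple (N := size z) x) <->
  forall k, k < size z -> (holds2 phi (x k) y <-> nth false z k).
Proof.
have slotE k : k < size z ->
    sat (pair_assign y (flatten_tuple (N := size z) x))
        (rename (m + size z * n) (slot k) phi) <-> holds2 phi (x k) y.
  move=> kz; rewrite sat_rename => [|j /phi_nm]; last exact: slot_bound.
  by apply: eq_sat => j /phi_nm jnm; apply: pair_assign_slot.
rewrite /holds2 sat_big_fAnd; split=> xy k; last rewrite mem_iota add0n.
  by move=> kz; have := xy k; rewrite mem_iota add0n kz sat_fLit slotE //; apply.
by move=> kz; rewrite sat_fLit slotE //; apply: xy.
Qed.

Variable b : nat -> 'I_m -> M.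
Hypothesis ab_lt : forall i j, holds2 phi (a i) (b j) <-> i < j.

Lemma realized_sorted g z : {homo g : i j / i < j} -> sorted geb z ->
  realized z (map g (iota 0 (size z))).
Proof.
move=> g_incr z_sorted; exists (b (g (find negb z))) => k kz.
rewrite (nth_map 0) ?size_iota // nth_iota // add0n ab_lt.
by rewrite (leqW_mono (leq_mono g_incr)) sorted_geb_nth.
Qed.

Lemma finite_chains_of_swap g u v : {homo g : i j / i < j} ->
  (forall s, ascending (size (u ++ false :: true :: v)) s ->
     realized (u ++ true :: false :: v) (map g s)) ->
  (forall s, ascending (size (u ++ false :: true :: v)) s ->
     ~ realized (u ++ false :: true :: v) (map g s)) ->
  forall K, exists c : nat -> 'I_(size (u ++ true :: v) * n) -> M,
    forall t, t < K -> grows_strictly m (pattern_formula (u ++ true :: v)) (c t) (c t.+1).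
Proof.
move=> g_incr R10 nR01 K; set p := size u.
pose lo := map g (iota 0 p); pose hi := map g (iota (p + K).+2 (size v)).
exists (fun t => flatten_tuple (fun k => a (nth 0 (lo ++ g (p + K - t) :: hi) k))) => t tK.
set r := p + K - t.+1; have r_succ : r.+1 = p + K - t by rewrite subnSK // ltn_addl.
have s_asc : ascending (size (u ++ false :: true :: v))
                      (iota 0 p ++ iota r 2 ++ iota (p + K).+2 (size v)).
  rewrite /ascending !size_cat !size_iota /= eqxx sorted_iota_gap //.
    by rewrite /r -addnBA // leq_addr.
  by rewrite r_succ ltnS leqW // leq_subr.
have lo_u : size lo = size u by rewrite size_map size_iota.
have s_map : map g (iota 0 p ++ iota r 2 ++ iota (p + K).+2 (size v)) =
    lo ++ g r :: g r.+1 :: hi by rewrite !map_cat.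
have R : realized (u ++ true :: false :: v) (lo ++ g r :: g r.+1 :: hi).
  by rewrite -s_map; apply: R10.
have nR : ~ realized (u ++ false :: true :: v) (lo ++ g r :: g r.+1 :: hi).
  by rewrite -s_map; apply: nR01.
have [incl [y [yr nyr]]] := swap_chain_step lo_u R nR.
rewrite -r_succ; split=> [y'|]; first by rewrite !holds2_pattern; apply: incl.
by exists y; rewrite !holds2_pattern.
Qed.

End Patterns.

Unset Implicit Arguments.

Theorem theorem2p6 (L : signature) (T : formula L -> Prop) (n m : nat)
  (phi : formula L) (M : structure L)
  (a : nat -> 'I_n -> M) (b : nat -> 'I_m -> M) (N : nat) (E : {set 'I_N}) :
  complete_theory T -> has_vars phi n m -> models M T ->
  (forall s : 'I_N -> nat, (forall k l : 'I_N, k < l -> s k < s l) ->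
     ~ (exists y : 'I_m -> M, forall k : 'I_N,
          (k \in E -> holds2 phi (a (s k)) y) /\
          (k \notin E -> ~ holds2 phi (a (s k)) y))) ->
  (forall i j : nat, holds2 phi (a i) (b j) <-> i < j) ->
  SOP T.
Proof.
move=> _ phi_nm MT E_free ab_lt.
have [g [g_incr g_homog]] :=
  ramsey_finite N (fun (z : N.-tuple bool) s => realized m phi a z s).
have homogE z s : size z = N -> ascending N s ->
    realized m phi a z (map g s) <-> realized m phi a z (map g (iota 0 N)).
  move=> /eqP zN s_asc; have [c zc] := g_homog (Tuple zN).
  by rewrite zc // zc // /ascending size_iota eqxx iota_ltn_sorted.
pose w := [seq k \in E | k <- enum 'I_N].
have wN : size w = N by rewrite size_map size_enum_ord.
have nRw : ~ realized m phi a w (map g (iota 0 N)).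
  move=> [y yw]; apply: (E_free (fun k => g k)) => [k l /g_incr //|]; exists y => k.
  have := yw k; rewrite wN ltn_ord (nth_map 0) ?size_iota // nth_iota // add0n.
  rewrite (nth_map k) ?size_enum_ord // nth_ord_enum => /(_ isT) ykE.
  by split=> [/ykE|/negbTE kE /ykE]; last rewrite kE.
have sortedR z : size z = N -> sorted geb z -> realized m phi a z (map g (iota 0 N)).
  by move=> <-; apply: realized_sorted.
have [u [v [uvN nR01 R10]]] := exists_critical_swap sortedR wN nRw.
apply: (sop_of_finite_chains MT (pattern_formula_vars phi_nm (z := u ++ true :: v))).
apply: (finite_chains_of_swap (a := a) phi_nm g_incr); rewrite uvN => s s_asc.
  by rewrite homogE // -uvN !size_cat.
by rewrite homogE.
Qed.
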